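(* Let $\beta,\delta\in(0,1)$, $K>0$, and let $\eta_1,\eta_2\ge0$ be constants. Consider $$\frac{df}{dt}=\tfrac12 fm\beta L-\delta f-\eta_1 f^{3/2},\qquad \frac{dm}{dt}=\tfrac12 fm\beta L-\delta m+\eta_2 m^{3/2},\qquad L=1-\frac{f+m}{K}.$$ If $\beta K<2\delta-\eta_2\sqrt K$ and $\delta>\eta_2\sqrt K$, then the trivial equilibrium $(0,0)$ is globally asymptotically stable.
   Context: $f,m$ are female and male densities, with populations considered in the region $0\le f,m$, $f+m\le K$. The model uses power-law female harvesting and male stocking. *)

From Stdlib Require Import Reals.
From Coquelicot Require Import Coquelicot.
Open Scope R_scope.

(* x^{3/2} for x >= 0 (the model is only considered for nonnegative densities). *)
Definition pow32 (x : R) : R := x * sqrt x.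

Definition Lfac (K f m : R) : R := 1 - (f + m) / K.

Definition rhs_f (beta delta eta1 K f m : R) : R :=
  / 2 * f * m * beta * Lfac K f m - delta * f - eta1 * pow32 f.

Definition rhs_m (beta delta eta2 K f m : R) : R :=
  / 2 * f * m * beta * Lfac K f m - delta * m + eta2 * pow32 m.

Definition in_region (K f m : R) : Prop := 0 <= f /\ 0 <= m /\ f + m <= K.

Definition is_solution (beta delta eta1 eta2 K : R) (f m : R -> R) : Prop :=
  filterlim f (at_right 0) (locally (f 0)) /\
  filterlim m (at_right 0) (locally (m 0)) /\
  (forall t, 0 < t ->
     is_derive f t (rhs_f beta delta eta1 K (f t) (m t)) /\
     is_derive m t (rhs_m beta delta eta2 K (f t) (m t))).

Definition GAS_origin (beta delta eta1 eta2 K : R) : Prop :=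
  (forall eps, 0 < eps -> exists r, 0 < r /\
     forall f m, is_solution beta delta eta1 eta2 K f m ->
       in_region K (f 0) (m 0) -> Rabs (f 0) + Rabs (m 0) < r ->
       forall t, 0 <= t -> Rabs (f t) + Rabs (m t) < eps) /\
  (forall f m, is_solution beta delta eta1 eta2 K f m ->
     in_region K (f 0) (m 0) ->
     is_lim f p_infty 0 /\ is_lim m p_infty 0).

From Stdlib Require Import Reals Lra.
From Coquelicot Require Import Coquelicot.
Open Scope R_scope.

(* Invariance of the region is a comparison principle: on a compact time interval the
   solution is bounded, so each of [f], [m] and [K - f - m] satisfies [g' >= C g] wherever
   [g < 0]; by Gronwall its negative part stays [0].  Inside the region [V = f + m] is a
   Lyapunov function: [m L <= K/4] and [m^(3/2) <= sqrt K m] give [V' <= - kap V] with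
   [kap = min (delta - beta K / 4) (delta - eta2 sqrt K) > 0], so [V] decays exponentially. *)

Definition rcont0 (g : R -> R) : Prop := filterlim g (at_right 0) (locally (g 0)).

Lemma continuous_rcont0 (g : R -> R) : continuous g 0 -> rcont0 g.
Proof.
  intros Hg P HP. apply filter_le_within, Hg, HP.
Qed.

Lemma rcont0_comp (g h : R -> R) : rcont0 g -> continuous h (g 0) -> rcont0 (fun t => h (g t)).
Proof. intros Hg Hh. eapply filterlim_comp; [exact Hg | exact Hh]. Qed.

Lemma rcont0_plus (g h : R -> R) : rcont0 g -> rcont0 h -> rcont0 (fun t => g t + h t).
Proof.
  intros Hg Hh. eapply filterlim_comp_2; [exact Hg | exact Hh | apply (filterlim_plus (g 0) (h 0))].
Qed.

Lemma rcont0_mult (g h : R -> R) : rcont0 g -> rcont0 h -> rcont0 (fun t => g t * h t).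
Proof.
  intros Hg Hh. eapply filterlim_comp_2; [exact Hg | exact Hh | apply (filterlim_mult (g 0) (h 0))].
Qed.

Lemma is_derive_continuous (g : R -> R) (x l : R) : is_derive g x l -> continuous g x.
Proof.
  intro Hd. apply (ex_derive_continuous (K := R_AbsRing) (V := R_NormedModule)). exists l; exact Hd.
Qed.

Lemma derive_nonpos_le_at0 (g dg : R -> R) (T : R) : rcont0 g ->
  (forall t, 0 < t <= T -> is_derive g t (dg t) /\ dg t <= 0) ->
  forall t, 0 <= t <= T -> g t <= g 0.
Proof.
  intros Hg Hd t [Ht0 HtT].
  destruct (Req_dec t 0) as [-> | Hne]; [lra |].
  assert (Hinner : forall s, 0 < s < t -> g t <= g s).
  { intros s Hs.
    destruct (MVT_gen g s t dg) as [c [Hc Heq]];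
      rewrite ?Rmin_left, ?Rmax_right in * by lra.
    - intros x Hx. apply Hd; lra.
    - intros x Hx. apply continuity_pt_filterlim, (is_derive_continuous _ _ (dg x)), Hd; lra.
    - assert (dg c <= 0) by (apply Hd; lra). nra. }
  apply (closed_filterlim_loc g (fun y => g t <= y) (g 0) Hg); [| apply closed_ge].
  assert (Ht : 0 < t) by lra.
  exists (mkposreal t Ht). intros s Hs Hs0. apply Hinner. split; [exact Hs0 |].
  apply Rabs_def2 in Hs. unfold minus, plus, opp in Hs; simpl in Hs. lra.
Qed.

Lemma gronwall_le (q dq : R -> R) (C T : R) : rcont0 q ->
  (forall t, 0 < t <= T -> is_derive q t (dq t) /\ dq t <= C * q t) ->
  forall t, 0 <= t <= T -> q t <= q 0 * exp (C * t).
Proof.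
  intros Hq Hd t Ht.
  assert (Hexp : forall x, is_derive (fun x => exp (- (C * x))) x (- C * exp (- (C * x)))).
  { intro x. auto_derive; [auto | ring]. }
  assert (Hle : q t * exp (- (C * t)) <= q 0 * exp (- (C * 0))).
  { apply (derive_nonpos_le_at0 (fun x => q x * exp (- (C * x)))
             (fun x => (dq x - C * q x) * exp (- (C * x))) T); [| | exact Ht].
    - apply rcont0_mult; [exact Hq |].
      apply continuous_rcont0, (is_derive_continuous _ _ _ (Hexp 0)).
    - intros x Hx. destruct (Hd x Hx) as [Hdq Hdq_le]. split.
      + replace ((dq x - C * q x) * exp (- (C * x)))
          with (dq x * exp (- (C * x)) + q x * (- C * exp (- (C * x)))) by ring.
        apply (is_derive_mult _ _ _ _ _ Hdq (Hexp x)). intros; apply Rmult_comm.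
      + pose proof (exp_pos (- (C * x))). nra. }
  rewrite Rmult_0_r, Ropp_0, exp_0, Rmult_1_r in Hle.
  replace (q t) with (q t * exp (- (C * t)) * exp (C * t))
    by (rewrite Rmult_assoc, <- exp_plus, Rplus_opp_l, exp_0; ring).
  pose proof (exp_pos (C * t)). nra.
Qed.

Lemma rcont0_bounded (g : R -> R) (T : R) : 0 <= T -> rcont0 g ->
  (forall t, 0 < t <= T -> continuous g t) ->
  exists B, forall t, 0 <= t <= T -> Rabs (g t) <= B.
Proof.
  intros HT Hg Hc.
  set (ext := fun t => Rabs (g (Rmax 0 t))).
  assert (Hext : forall c, 0 <= c <= T -> continuity_pt ext c).
  { intros c Hc0. apply continuity_pt_filterlim.
    apply (continuous_comp (fun t => g (Rmax 0 t)) Rabs); [| apply continuous_Rabs].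
    destruct (Req_dec c 0) as [-> | Hne].
    - intros P HP. rewrite Rmax_left in HP by lra.
      destruct (Hg P HP) as [d Hd]. exists d. intros y Hy.
      destruct (Rle_lt_dec y 0).
      + rewrite Rmax_left by lra. exact (locally_singleton _ _ HP).
      + rewrite Rmax_right by lra. exact (Hd y Hy r).
    - assert (Hc_pos : 0 < c) by lra.
      apply (continuous_ext_loc _ g); [| apply Hc; lra].
      exists (mkposreal c Hc_pos). intros y Hy.
      apply Rabs_def2 in Hy. unfold minus, plus, opp in Hy; simpl in Hy.
      rewrite Rmax_right by lra. reflexivity. }
  destruct (continuity_ab_maj ext 0 T HT Hext) as [tmax [Hmax _]].
  exists (ext tmax). intros t Ht. specialize (Hmax t Ht).
  unfold ext in Hmax. rewrite (Rmax_right 0 t) in Hmax by lra. exact Hmax.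
Qed.

Lemma is_derive_sqr_neg_part (x : R) : is_derive (fun y => Rmin y 0 ^ 2) x (2 * Rmin x 0).
Proof.
  destruct (Rtotal_order x 0) as [Hx | [-> | Hx]].
  - apply (is_derive_ext_loc (fun y => y ^ 2)).
    + assert (Hnx : 0 < - x) by lra.
      exists (mkposreal _ Hnx). intros y Hy.
      apply Rabs_def2 in Hy. unfold minus, plus, opp in Hy; simpl in Hy.
      rewrite Rmin_left by lra. reflexivity.
    + rewrite Rmin_left by lra. auto_derive; [auto | ring].
  - apply is_derive_Reals. intros eps Heps. exists (mkposreal eps Heps).
    intros h Hh Hh_lt. simpl in Hh_lt. rewrite Rplus_0_l, (Rmin_left 0 0) by lra.
    destruct (Rlt_or_le h 0).
    + rewrite Rmin_left by lra.
      replace ((h ^ 2 - 0 ^ 2) / h - 2 * 0) with h by (field; lra). exact Hh_lt.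
    + rewrite Rmin_right by lra.
      replace ((0 ^ 2 - 0 ^ 2) / h - 2 * 0) with 0 by (field; lra).
      rewrite Rabs_R0; lra.
  - apply (is_derive_ext_loc (fun _ => 0)).
    + exists (mkposreal x Hx). intros y Hy.
      apply Rabs_def2 in Hy. unfold minus, plus, opp in Hy; simpl in Hy.
      rewrite Rmin_right by lra. simpl. ring.
    + rewrite Rmin_right by lra. auto_derive; [auto | ring].
Qed.

(* The squared negative part of [g] vanishes at [0] and, by the hypothesis, grows at most
   exponentially, so Gronwall keeps it at [0]. *)
Lemma nonneg_preserved (g dg : R -> R) (C T : R) : rcont0 g -> 0 <= g 0 ->
  (forall t, 0 < t <= T -> is_derive g t (dg t) /\ (g t < 0 -> C * g t <= dg t)) ->
  forall t, 0 <= t <= T -> 0 <= g t.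
Proof.
  intros Hg Hg0 Hd t Ht.
  assert (Hq : Rmin (g t) 0 ^ 2 <= Rmin (g 0) 0 ^ 2 * exp (2 * C * t)).
  { apply (gronwall_le (fun t => Rmin (g t) 0 ^ 2) (fun t => 2 * Rmin (g t) 0 * dg t) (2 * C) T);
      [| | exact Ht].
    - apply (rcont0_comp g (fun y => Rmin y 0 ^ 2) Hg).
      exact (is_derive_continuous _ _ _ (is_derive_sqr_neg_part _)).
    - intros x Hx. destruct (Hd x Hx) as [Hdg Hsign]. split.
      + replace (2 * Rmin (g x) 0 * dg x) with (dg x * (2 * Rmin (g x) 0)) by ring.
        apply (is_derive_comp (fun y => Rmin y 0 ^ 2) g x _ _ (is_derive_sqr_neg_part _) Hdg).
      + destruct (Rlt_or_le (g x) 0) as [Hneg | Hpos].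
        * rewrite Rmin_left by lra. specialize (Hsign Hneg). nra.
        * rewrite Rmin_right by lra. lra. }
  rewrite (Rmin_right (g 0)) in Hq by lra.
  destruct (Rlt_or_le (g t) 0) as [Hneg | Hpos]; [| exact Hpos].
  rewrite Rmin_left in Hq by lra. nra.
Qed.

Lemma is_lim_squeeze_exp (g : R -> R) (c k : R) : 0 < k ->
  (forall t, 0 <= t -> 0 <= g t <= c * exp (- k * t)) -> is_lim g p_infty 0.
Proof.
  intros Hk Hg.
  assert (Hlin : is_lim (fun t => - k * t) p_infty m_infty).
  { replace m_infty with (Rbar_mult (- k) p_infty)
      by (simpl; destruct (Rle_dec 0 (- k)); [exfalso; lra | reflexivity]).
    apply is_lim_scal_l, is_lim_id. }
  assert (Hexp : is_lim (fun t => c * exp (- k * t)) p_infty 0).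
  { replace (Finite 0) with (Rbar_mult c 0) by (simpl; f_equal; ring).
    apply is_lim_scal_l.
    apply (is_lim_comp exp (fun t => - k * t) p_infty 0 m_infty is_lim_exp_m Hlin).
    exists 0. intros x _. discriminate. }
  apply (is_lim_le_le_loc (fun _ => 0) (fun t => c * exp (- k * t)));
    [| apply is_lim_const | exact Hexp].
  exists 0. intros t Ht. apply Hg. lra.
Qed.

Lemma Lfac_abs_le (K B f m : R) : 0 < K -> Rabs f <= B -> Rabs m <= B ->
  Rabs (Lfac K f m) <= 1 + 2 * B / K.
Proof.
  intros HK Hf Hm. unfold Lfac, Rdiv.
  apply Rabs_le_between in Hf. apply Rabs_le_between in Hm.
  pose proof (Rinv_0_lt_compat K HK).
  apply Rabs_le. split; nra.
Qed.

Lemma half_mul_Lfac_le (beta K B x f m : R) : 0 <= beta -> 0 < K ->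
  Rabs x <= B -> Rabs f <= B -> Rabs m <= B ->
  / 2 * x * beta * Lfac K f m <= / 2 * beta * (B * (1 + 2 * B / K)).
Proof.
  intros Hbeta HK Hx Hf Hm.
  assert (HxL : x * Lfac K f m <= B * (1 + 2 * B / K)).
  { apply (Rle_trans _ (Rabs x * Rabs (Lfac K f m))).
    - rewrite <- Rabs_mult. apply Rle_abs.
    - apply Rmult_le_compat; [apply Rabs_pos | apply Rabs_pos | exact Hx |].
      exact (Lfac_abs_le K B f m HK Hf Hm). }
  nra.
Qed.

Lemma mul_Lfac_le (K f m : R) : 0 < K -> 0 <= f -> 0 <= m -> m * Lfac K f m <= K / 4.
Proof.
  intros HK Hf Hm. unfold Lfac.
  apply (Rmult_le_reg_r K); [exact HK |].
  replace (m * (1 - (f + m) / K) * K) with (K * m - m * f - m * m) by (field; lra).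
  replace (K / 4 * K) with (K * K / 4) by field.
  pose proof (Rle_0_sqr (m - K / 2)). unfold Rsqr in *. nra.
Qed.

Lemma sqrt_sub_le_div (K m : R) : 0 < K -> K <= m -> sqrt m - sqrt K <= (m - K) / sqrt K.
Proof.
  intros HK HKm.
  pose proof (sqrt_lt_R0 K HK) as HsK.
  assert (Hs : sqrt K <= sqrt m) by (apply sqrt_le_1_alt; exact HKm).
  pose proof (sqrt_sqrt K (Rlt_le _ _ HK)).
  pose proof (sqrt_sqrt m (Rle_trans _ _ _ (Rlt_le _ _ HK) HKm)).
  apply (Rmult_le_reg_r (sqrt K)); [exact HsK |].
  unfold Rdiv. rewrite Rmult_assoc, Rinv_l, Rmult_1_r by lra. nra.
Qed.

Section Model.

Variables (beta delta eta1 eta2 K : R).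
Hypotheses (Hbeta : 0 <= beta) (HK : 0 < K) (Heta1 : 0 <= eta1) (Heta2 : 0 <= eta2).

Lemma rhs_f_factor (f m : R) :
  rhs_f beta delta eta1 K f m = f * (/ 2 * m * beta * Lfac K f m - delta - eta1 * sqrt f).
Proof. unfold rhs_f, pow32. ring. Qed.

Lemma rhs_m_factor (f m : R) :
  rhs_m beta delta eta2 K f m = m * (/ 2 * f * beta * Lfac K f m - delta + eta2 * sqrt m).
Proof. unfold rhs_m, pow32. ring. Qed.

Lemma rhs_sum_le_neg_mul (kap f m : R) :
  kap <= delta - beta * K / 4 -> kap <= delta - eta2 * sqrt K -> in_region K f m ->
  rhs_f beta delta eta1 K f m + rhs_m beta delta eta2 K f m <= - kap * (f + m).
Proof.
  intros Hkap1 Hkap2 [Hf [Hm HfmK]].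
  unfold rhs_f, rhs_m, pow32.
  assert (HmL : beta * f * (m * Lfac K f m) <= beta * f * (K / 4)).
  { apply Rmult_le_compat_l; [nra | exact (mul_Lfac_le K f m HK Hf Hm)]. }
  assert (Hf32 : 0 <= eta1 * (f * sqrt f)).
  { apply Rmult_le_pos; [exact Heta1 | apply Rmult_le_pos; [exact Hf | apply sqrt_pos]]. }
  assert (Hm32 : eta2 * (m * sqrt m) <= eta2 * (m * sqrt K)).
  { apply Rmult_le_compat_l; [exact Heta2 |].
    apply Rmult_le_compat_l; [exact Hm | apply sqrt_le_1_alt; lra]. }
  nra.
Qed.

Hypothesis Hdelta : eta2 * sqrt K <= delta.

Lemma rhs_sum_le_above_K (B f m : R) : 0 <= f -> 0 <= m <= B -> K < f + m ->
  rhs_f beta delta eta1 K f m + rhs_m beta delta eta2 K f m <= eta2 * B * ((f + m - K) / sqrt K).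
Proof.
  intros Hf [Hm HmB] HKfm.
  pose proof (sqrt_lt_R0 K HK) as HsK.
  assert (HL : Lfac K f m < 0).
  { unfold Lfac. apply Rlt_minus_l. rewrite Rplus_0_l.
    apply (Rmult_lt_reg_r K); [exact HK |].
    unfold Rdiv. rewrite Rmult_assoc, Rinv_l, Rmult_1_r, Rmult_1_l by lra. exact HKfm. }
  assert (Hsum : rhs_f beta delta eta1 K f m + rhs_m beta delta eta2 K f m
                 <= eta2 * m * (sqrt m - sqrt K)).
  { unfold rhs_f, rhs_m, pow32.
    assert (0 <= eta1 * (f * sqrt f)).
    { apply Rmult_le_pos; [exact Heta1 | apply Rmult_le_pos; [exact Hf | apply sqrt_pos]]. }
    assert (0 <= beta * (f * m)) by (apply Rmult_le_pos; nra).
    assert (beta * (f * m) * Lfac K f m <= 0) by nra.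
    assert (0 <= eta2 * sqrt K) by (apply Rmult_le_pos; [exact Heta2 | apply sqrt_pos]).
    assert (0 <= f * delta) by nra.
    assert (m * (eta2 * sqrt K) <= m * delta) by nra.
    nra. }
  assert (Hgap : 0 < (f + m - K) / sqrt K) by (apply Rdiv_lt_0_compat; lra).
  destruct (Rle_or_lt m K) as [HmK | HmK].
  - assert (sqrt m <= sqrt K) by (apply sqrt_le_1_alt; exact HmK).
    assert (0 <= eta2 * m) by (apply Rmult_le_pos; lra).
    assert (eta2 * m * (sqrt m - sqrt K) <= 0) by nra.
    assert (0 <= eta2 * B * ((f + m - K) / sqrt K)) by (apply Rmult_le_pos; nra).
    lra.
  - assert (Hd : sqrt m - sqrt K <= (f + m - K) / sqrt K).
    { apply (Rle_trans _ ((m - K) / sqrt K)); [apply sqrt_sub_le_div; lra |].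
      unfold Rdiv. apply Rmult_le_compat_r; [left; apply Rinv_0_lt_compat; exact HsK | lra]. }
    assert (Hd0 : 0 <= sqrt m - sqrt K) by (pose proof (sqrt_le_1_alt K m); lra).
    apply (Rle_trans _ _ _ Hsum).
    apply Rmult_le_compat; [nra | exact Hd0 | nra | exact Hd].
Qed.

Section Solution.

Variables (f m : R -> R) (T B : R).
Hypothesis Hsol : is_solution beta delta eta1 eta2 K f m.
Hypotheses (HfB : forall t, 0 <= t <= T -> Rabs (f t) <= B)
           (HmB : forall t, 0 <= t <= T -> Rabs (m t) <= B).

Let M := / 2 * beta * (B * (1 + 2 * B / K)).

Lemma solution_f_nonneg : 0 <= f 0 -> forall t, 0 <= t <= T -> 0 <= f t.
Proof.
  destruct Hsol as [Hf0 [_ Hder]]. intro Hf00.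
  apply (nonneg_preserved f (fun t => rhs_f beta delta eta1 K (f t) (m t)) M T Hf0 Hf00).
  intros t Ht. destruct (Hder t ltac:(lra)) as [Hdf _]. split; [exact Hdf |].
  intro Hneg. rewrite rhs_f_factor.
  assert (Hgrowth : / 2 * m t * beta * Lfac K (f t) (m t) - delta - eta1 * sqrt (f t) <= M).
  { pose proof (half_mul_Lfac_le beta K B (m t) (f t) (m t) Hbeta HK
                  (HmB t ltac:(lra)) (HfB t ltac:(lra)) (HmB t ltac:(lra))).
    assert (0 <= eta2 * sqrt K) by (apply Rmult_le_pos; [exact Heta2 | apply sqrt_pos]).
    assert (0 <= eta1 * sqrt (f t)) by (apply Rmult_le_pos; [exact Heta1 | apply sqrt_pos]).
    unfold M. lra. }
  nra.
Qed.

Lemma solution_m_nonneg : 0 <= m 0 -> forall t, 0 <= t <= T -> 0 <= m t.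
Proof.
  destruct Hsol as [_ [Hm0 Hder]]. intro Hm00.
  apply (nonneg_preserved m (fun t => rhs_m beta delta eta2 K (f t) (m t))
           (M + eta2 * sqrt B) T Hm0 Hm00).
  intros t Ht. destruct (Hder t ltac:(lra)) as [_ Hdm]. split; [exact Hdm |].
  intro Hneg. rewrite rhs_m_factor.
  assert (Hgrowth : / 2 * f t * beta * Lfac K (f t) (m t) - delta + eta2 * sqrt (m t)
                    <= M + eta2 * sqrt B).
  { pose proof (half_mul_Lfac_le beta K B (f t) (f t) (m t) Hbeta HK
                  (HfB t ltac:(lra)) (HfB t ltac:(lra)) (HmB t ltac:(lra))).
    assert (0 <= eta2 * sqrt K) by (apply Rmult_le_pos; [exact Heta2 | apply sqrt_pos]).
    assert (sqrt (m t) <= sqrt B).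
    { apply sqrt_le_1_alt. pose proof (HmB t ltac:(lra)). pose proof (Rle_abs (m t)). lra. }
    unfold M. nra. }
  nra.
Qed.

Lemma solution_sum_le_K : in_region K (f 0) (m 0) -> forall t, 0 <= t <= T -> f t + m t <= K.
Proof.
  intros [Hf00 [Hm00 Hsum0]] t Ht.
  pose proof Hsol as [Hf0 [Hm0 Hder]].
  enough (0 <= K - (f t + m t)) by lra.
  apply (nonneg_preserved (fun t => K - (f t + m t))
           (fun t => - (rhs_f beta delta eta1 K (f t) (m t) + rhs_m beta delta eta2 K (f t) (m t)))
           (eta2 * B / sqrt K) T); [| lra | | exact Ht].
  - apply (rcont0_comp (fun t => f t + m t) (fun y => K - y)); [apply rcont0_plus; assumption |].
    apply (is_derive_continuous _ _ (-1)). auto_derive; [auto | ring].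
  - intros x Hx. destruct (Hder x ltac:(lra)) as [Hdf Hdm]. split.
    + pose proof (is_derive_minus (fun _ => K) (fun t => f t + m t) x _ _
                    (is_derive_const K x) (is_derive_plus _ _ x _ _ Hdf Hdm)) as Hd.
      unfold minus, plus, opp, zero in Hd; simpl in Hd.
      rewrite Rplus_0_l in Hd. exact Hd.
    + intro Habove.
      pose proof (sqrt_lt_R0 K HK).
      assert (Hfx : 0 <= f x) by (apply solution_f_nonneg; [exact Hf00 | lra]).
      assert (Hmx : 0 <= m x <= B).
      { split; [apply solution_m_nonneg; [exact Hm00 | lra] |].
        pose proof (HmB x ltac:(lra)). pose proof (Rle_abs (m x)). lra. }
      pose proof (rhs_sum_le_above_K B (f x) (m x) Hfx Hmx ltac:(lra)).
      replace (eta2 * B / sqrt K * (K - (f x + m x)))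
        with (- (eta2 * B * ((f x + m x - K) / sqrt K))) by (field; lra).
      lra.
Qed.

End Solution.

Lemma solution_stays_in_region (f m : R -> R) : is_solution beta delta eta1 eta2 K f m ->
  in_region K (f 0) (m 0) -> forall t, 0 <= t -> in_region K (f t) (m t).
Proof.
  intros Hsol Hreg0 T HT.
  pose proof Hsol as [Hf0 [Hm0 Hder]].
  destruct (rcont0_bounded f T HT Hf0) as [Bf HBf].
  { intros t Ht. exact (is_derive_continuous _ _ _ (proj1 (Hder t ltac:(lra)))). }
  destruct (rcont0_bounded m T HT Hm0) as [Bm HBm].
  { intros t Ht. exact (is_derive_continuous _ _ _ (proj2 (Hder t ltac:(lra)))). }
  assert (HfB : forall t, 0 <= t <= T -> Rabs (f t) <= Rmax Bf Bm).
  { intros t Ht. apply (Rle_trans _ _ _ (HBf t Ht)), Rmax_l. }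
  assert (HmB : forall t, 0 <= t <= T -> Rabs (m t) <= Rmax Bf Bm).
  { intros t Ht. apply (Rle_trans _ _ _ (HBm t Ht)), Rmax_r. }
  pose proof Hreg0 as [Hf00 [Hm00 _]].
  repeat split.
  - exact (solution_f_nonneg f m T _ Hsol HfB HmB Hf00 T ltac:(lra)).
  - exact (solution_m_nonneg f m T _ Hsol HfB HmB Hm00 T ltac:(lra)).
  - exact (solution_sum_le_K f m T _ Hsol HfB HmB Hreg0 T ltac:(lra)).
Qed.

Lemma solution_sum_exp_decay (kap : R) :
  kap <= delta - beta * K / 4 -> kap <= delta - eta2 * sqrt K ->
  forall f m, is_solution beta delta eta1 eta2 K f m -> in_region K (f 0) (m 0) ->
  forall t, 0 <= t -> f t + m t <= (f 0 + m 0) * exp (- kap * t).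
Proof.
  intros Hkap1 Hkap2 f m Hsol Hreg0 t Ht.
  pose proof Hsol as [Hf0 [Hm0 Hder]].
  apply (gronwall_le (fun t => f t + m t)
           (fun t => rhs_f beta delta eta1 K (f t) (m t) + rhs_m beta delta eta2 K (f t) (m t))
           (- kap) t); [apply rcont0_plus; assumption | | lra].
  intros x Hx. destruct (Hder x ltac:(lra)) as [Hdf Hdm]. split.
  - exact (is_derive_plus _ _ _ _ _ Hdf Hdm).
  - apply rhs_sum_le_neg_mul; [exact Hkap1 | exact Hkap2 |].
    apply (solution_stays_in_region f m Hsol Hreg0). lra.
Qed.

End Model.

Theorem mainTheorem13 (beta delta K eta1 eta2 : R) :
  0 < beta < 1 -> 0 < delta < 1 -> 0 < K -> 0 <= eta1 -> 0 <= eta2 ->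
  beta * K < 2 * delta - eta2 * sqrt K ->
  delta > eta2 * sqrt K ->
  GAS_origin beta delta eta1 eta2 K.
Proof.
  intros Hbeta Hdelta HK Heta1 Heta2 Hc1 Hc2.
  pose proof (Rmult_le_pos _ _ Heta2 (sqrt_pos K)) as Heta2K.
  set (kap := Rmin (delta - beta * K / 4) (delta - eta2 * sqrt K)).
  assert (Hkap : 0 < kap) by (apply Rmin_glb_lt; lra).
  assert (Hdecay := solution_sum_exp_decay beta delta eta1 eta2 K ltac:(lra) HK Heta1 Heta2
                      ltac:(lra) kap (Rmin_l _ _) (Rmin_r _ _)).
  assert (Hregion := solution_stays_in_region beta delta eta1 eta2 K ltac:(lra) HK Heta1 Heta2
                       ltac:(lra)).
  split.
  - intros eps Heps. exists eps. split; [exact Heps |].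
    intros f m Hsol Hreg0 Hsmall t Ht.
    destruct (Hregion f m Hsol Hreg0 t Ht) as [Hft [Hmt _]].
    pose proof Hreg0 as [Hf0 [Hm0 _]].
    rewrite !Rabs_pos_eq in * by lra.
    pose proof (Hdecay f m Hsol Hreg0 t Ht).
    assert (exp (- kap * t) <= 1).
    { destruct (Req_dec t 0) as [-> | Ht0]; [rewrite Rmult_0_r, exp_0; lra |].
      rewrite <- exp_0. left. apply exp_increasing. nra. }
    nra.
  - intros f m Hsol Hreg0.
    split; apply (is_lim_squeeze_exp _ (f 0 + m 0) kap Hkap); intros t Ht;
      destruct (Hregion f m Hsol Hreg0 t Ht) as [? [? _]];
      pose proof (Hdecay f m Hsol Hreg0 t Ht); lra.
Qed.
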